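(* Let $\alpha=\frac{p}{q}$ with $q\ge1$, $\gcd(p,q)=1$. Then (1) $\mathcal{F}_qR_{\theta_+}=R_0\mathcal{F}_q$; (2) $\mathcal{F}_q\Delta^{\mathrm{per}}_q=D_{q,0}\mathcal{F}_q$; (3) $\mathcal{F}_qD_{q,\theta_+}=\Delta^{\mathrm{anti}}_q\mathcal{F}_q$.
   Context: $\mathcal{V}^{\mathrm{per}}_q$ (resp. $\mathcal{V}^{\mathrm{anti}}_q$) is the $q$-dimensional space of sequences $\psi:\mathbb{Z}\to\mathbb{C}$ with $\psi_{n+q}=\psi_n$ (resp. $\psi_{n+q}=-\psi_n$). $\theta_+=\alpha/2$ if $p$ is odd and $\theta_+=(1+\alpha)/2$ if $p$ is even. For $j\in\mathbb{Z}/q\mathbb{Z}$, $e_j\in\mathcal{V}^{\mathrm{per}}_q$ is given by $(e_j)_n=1$ if $n\equiv j\pmod q$ and $0$ otherwise, and $f_j\in\mathcal{V}^{\mathrm{anti}}_q$ by $(f_j)_n=\exp(2\pi i(j\alpha+\theta_+)n)$. $\mathcal{F}_q:\mathcal{V}^{\mathrm{per}}_q\to\mathcal{V}^{\mathrm{anti}}_q$ is the linear map with $\mathcal{F}_qe_j=f_j$. $\Delta_q\psi=\mathcal{T}_1\psi+\mathcal{T}_{-1}\psi$ where $(\mathcal{T}_r\psi)_n=\psi_{n-r}$, and $\Delta^{\mathrm{per}}_q$, $\Delta^{\mathrm{anti}}_q$ are its restrictions to $\mathcal{V}^{\mathrm{per}}_q$, $\mathcal{V}^{\mathrm{anti}}_q$.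 $D_{q,\theta}$ is the diagonal operator $(D_{q,\theta}\psi)_n=2\cos(2\pi(\theta+n\alpha))\psi_n$ (here $D_{q,0}$ acts on $\mathcal{V}^{\mathrm{anti}}_q$ and $D_{q,\theta_+}$ on $\mathcal{V}^{\mathrm{per}}_q$). $R_0:(\psi_n)\mapsto(\psi_{-n})$ on $\mathcal{V}^{\mathrm{anti}}_q$ and $R_{\theta_+}:(\psi_n)\mapsto(\psi_{-1-n})$ on $\mathcal{V}^{\mathrm{per}}_q$. *)

From HB Require Import structures.
From mathcomp Require Import all_boot all_order all_algebra.
From mathcomp Require Import reals trigo.
From mathcomp Require Import complex.
Set Implicit Arguments. Unset Strict Implicit. Unset Printing Implicit Defensive.
Import Order.TTheory GRing.Theory Num.Theory.
Local Open Scope ring_scope.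

Section Defs.
Variable R : realType.

Definition seqC := int -> R[i].

Definition alpha (p : int) (q : nat) : R := p%:~R / q%:R.

Definition theta_plus (p : int) (q : nat) : R :=
  if odd `|p|%N then alpha p q / 2 else (1 + alpha p q) / 2.

Definition e2pi (x : R) : R[i] := Complex (cos (2 * pi * x)) (sin (2 * pi * x)).

Definition is_per (q : nat) (psi : seqC) := forall n : int, psi (n + q%:Z) = psi n.
Definition is_anti (q : nat) (psi : seqC) := forall n : int, psi (n + q%:Z) = - psi n.

(* f_j, (f_j)_n = exp(2 pi i (j alpha + theta_+) n), j in {0..q-1} representing Z/qZ *)
Definition fvec (p : int) (q : nat) (j : nat) : seqC :=
  fun n => e2pi ((j%:R * alpha p q + theta_plus p q) * n%:~R).

(* F_q : the linear map with F_q e_j = f_j; since psi = sum_j psi_j e_j on V^per,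
   F_q psi = sum_{j in Z/qZ} psi_j f_j *)
Definition Fq (p : int) (q : nat) (psi : seqC) : seqC :=
  fun n => \sum_(j < q) psi (j : nat)%:Z * fvec p q j n.

Definition Tr (r : int) (psi : seqC) : seqC := fun n => psi (n - r).
Definition Delta (psi : seqC) : seqC := fun n => Tr 1 psi n + Tr (-1) psi n.

Definition Dq (p : int) (q : nat) (theta : R) (psi : seqC) : seqC :=
  fun n => Complex (2 * cos (2 * pi * (theta + n%:~R * alpha p q))) 0 * psi n.

Definition R0 (psi : seqC) : seqC := fun n => psi (- n).
Definition Rtp (psi : seqC) : seqC := fun n => psi (-1 - n).

End Defs.

Arguments alpha {R}. Arguments theta_plus {R}. Arguments e2pi {R}.
Arguments is_per {R}. Arguments is_anti {R}. Arguments fvec {R}.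
Arguments Fq {R}. Arguments Tr {R}. Arguments Delta {R}. Arguments Dq {R}.
Arguments R0 {R}. Arguments Rtp {R}.

From HB Require Import structures.
From mathcomp Require Import all_boot all_order all_algebra.
From mathcomp Require Import reals trigo.
From mathcomp Require Import complex.
From mathcomp Require Import ring zify.
From Stdlib Require Import FunctionalExtensionality.
Set Implicit Arguments. Unset Strict Implicit. Unset Printing Implicit Defensive.
Import Order.TTheory GRing.Theory Num.Theory.
Local Open Scope ring_scope.

(* Write F_q psi at n as sum_j psi_j e(w_j n) with frequencies w_j = j alpha + theta_+.
   Shifting the index j by q changes w_j by the integer p, so every term is
   q-periodic in j and sums over a window of q consecutive indices can be
   shifted at will.  Then:
   - a translation T_r of psi becomes, after shifting the window, the factor
     e(r alpha n), and T_1 + T_-1 gives e(alpha n) + e(-alpha n) = 2 cos(2 pi n alpha);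
   - the multiplier 2 cos(2 pi w_j) = e(w_j) + e(-w_j) becomes a shift n -> n -+ 1;
   - reversing the window j -> q - 1 - j sends w_j to an integer minus w_j,
     because 2 theta_+ - alpha is an integer: this turns psi_{-1-j} into a
     reflection n -> -n. *)

Lemma periodicz (U V : zmodType) (f : U -> V) (T : U) :
  periodic f T -> forall (k : int) a, f (a + T *~ k) = f a.
Proof.
move=> fT [] n a; first exact: periodicn.
by rewrite NegzE mulrNz -(periodicn fT n.+1 (a - T *+ n.+1)) subrK.
Qed.

Lemma sum_periodic_shift1 (V : nmodType) (q : nat) (g : int -> V) :
  (forall m, g (m + q%:Z) = g m) ->
  \sum_(j < q) g (j%:Z + 1) = \sum_(j < q) g j%:Z.
Proof.
case: q => [|q] g_per; first by rewrite !big_ord0.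
rewrite big_ord_recr big_ord_recl /= addrC; congr (_ + _).
  by rewrite -[RHS]g_per; congr g; lia.
by apply: eq_bigr => j _; rewrite /bump leq0n add1n; congr g; lia.
Qed.

Lemma sum_periodic_shift (V : nmodType) (q : nat) (g : int -> V) (k : int) :
  (forall m, g (m + q%:Z) = g m) ->
  \sum_(j < q) g (j%:Z + k) = \sum_(j < q) g j%:Z.
Proof.
have shift_nat n (h : int -> V) : (forall m, h (m + q%:Z) = h m) ->
    \sum_(j < q) h (j%:Z + n%:Z) = \sum_(j < q) h j%:Z.
  elim: n h => [|n IHn] h h_per; first by under eq_bigr do rewrite addr0.
  rewrite -(IHn h) // -(@sum_periodic_shift1 _ _ (fun m => h (m + n%:Z))).
    by apply: eq_bigr => j _; congr h; lia.
  by move=> m; rewrite addrAC h_per.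
case: k => n g_per; first exact: shift_nat.
have shifted_back := shift_nat n.+1 (fun m => g (m - n.+1%:Z)).
rewrite -{}shifted_back => [|m]; last by rewrite addrAC g_per.
by apply: eq_bigr => j _; congr g; lia.
Qed.

Section ExpTwoPi.
Variable R : realType.

Lemma e2piD (x y : R) : e2pi (x + y) = e2pi x * e2pi y.
Proof. by rewrite /e2pi mulrDr cosD sinD /=; congr Complex; ring. Qed.

Lemma e2pi_int (k : int) : e2pi (k%:~R : R) = 1.
Proof.
rewrite /e2pi; have -> : 2 * pi * k%:~R = 0 + (pi *+ 2) *~ k :> R.
  by rewrite add0r -mulrzr mulr2n; ring.
by rewrite (periodicz (@cosD2pi R)) (periodicz (@sinD2pi R)) cos0 sin0.
Qed.

Lemma e2piDz (x : R) (k : int) : e2pi (x + k%:~R) = e2pi x.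
Proof. by rewrite e2piD e2pi_int mulr1. Qed.

Lemma e2piN_add_e2pi (x : R) :
  e2pi (- x) + e2pi x = Complex (2 * cos (2 * pi * x)) 0.
Proof. by rewrite /e2pi mulrN cosN sinN /=; congr Complex; ring. Qed.

End ExpTwoPi.

Section FourierMap.
Variables (R : realType) (p : int) (q : nat).

Definition freq (k : int) : R := k%:~R * alpha p q + theta_plus p q.

Lemma FqE (psi : seqC R) (n : int) :
  Fq p q psi n = \sum_(j < q) psi j%:Z * e2pi (freq j%:Z * n%:~R).
Proof. by []. Qed.

Lemma FqD (phi psi : seqC R) (n : int) :
  Fq p q (fun m => phi m + psi m) n = Fq p q phi n + Fq p q psi n.
Proof. by rewrite !FqE -big_split; apply: eq_bigr => j _; rewrite mulrDl. Qed.

Lemma twice_theta_plus : exists k : int, theta_plus p q *+ 2 = alpha p q + k%:~R :> R.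
Proof.
rewrite /theta_plus; case: ifP => _; [exists 0 | exists 1];
  by rewrite mulr2n; field.
Qed.

Lemma Fq_Dq (psi : seqC R) :
  Fq p q (Dq p q (theta_plus p q) psi) = Delta (Fq p q psi).
Proof.
apply: functional_extensionality => n.
rewrite /Delta /Tr !FqE -big_split; apply: eq_bigr => j _ /=.
rewrite /Dq (addrC (theta_plus p q)) -/(freq j) -e2piN_add_e2pi.
rewrite !intrB rmorphN rmorph1 !mulrBr mulrN opprK mulr1 !e2piD; ring.
Qed.

Hypothesis q_gt0 : (0 < q)%N.

Lemma mulq_alpha : q%:R * alpha p q = p%:~R :> R.
Proof. by rewrite /alpha mulrC divfK // pnatr_eq0 -lt0n. Qed.

Lemma freqDq (k : int) : freq (k + q%:Z) = freq k + p%:~R.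
Proof. by rewrite /freq intrD mulrDl -mulq_alpha; ring. Qed.

Lemma freq_rev (k : int) : exists m : int, freq (q%:Z - 1 - k) = m%:~R - freq k.
Proof.
have [k0 twice_theta] := twice_theta_plus.
exists (p + k0); rewrite /freq !intrD !intrN -mulq_alpha.
have -> : k0%:~R = theta_plus p q *+ 2 - alpha p q :> R.
  by rewrite twice_theta addrC addKr.
by rewrite mulr2n; ring.
Qed.

Lemma Fq_Tr (r : int) (psi : seqC R) (n : int) : is_per q psi ->
  Fq p q (Tr r psi) n = e2pi (r%:~R * alpha p q * n%:~R) * Fq p q psi n.
Proof.
move=> psi_per; rewrite !FqE mulr_sumr.
pose g m := psi m * e2pi (freq (m + r) * n%:~R).
have g_per m : g (m + q%:Z) = g m.
  by rewrite /g psi_per addrAC freqDq mulrDl -intrM e2piDz.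
transitivity (\sum_(j < q) g (j%:Z + - r)).
  by apply: eq_bigr => j _; rewrite /g /Tr addrNK.
rewrite (sum_periodic_shift _ g_per); apply: eq_bigr => j _.
by rewrite /g mulrCA -e2piD /freq intrD; congr (_ * e2pi _); ring.
Qed.

Lemma Fq_Delta (psi : seqC R) : is_per q psi ->
  Fq p q (Delta psi) = Dq p q 0 (Fq p q psi).
Proof.
move=> psi_per; apply: functional_extensionality => n.
rewrite /Delta FqD !Fq_Tr // -mulrDl /Dq add0r addrC -e2piN_add_e2pi.
by congr ((e2pi _ + e2pi _) * _); rewrite ?rmorphN /=; ring.
Qed.

Lemma Fq_Rtp (psi : seqC R) : is_per q psi ->
  Fq p q (Rtp psi) = R0 (Fq p q psi).
Proof.
move=> psi_per; apply: functional_extensionality => n.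
rewrite /R0 /Rtp !FqE [RHS](reindex_inj rev_ord_inj); apply: eq_bigr => j _ /=.
have rev_j : (q - j.+1)%N%:Z = q%:Z - 1 - j%:Z by have := ltn_ord j; lia.
rewrite rev_j; have [m ->] := freq_rev j; rewrite -(psi_per (-1 - j%:Z)).
congr (psi _ * _); first lia.
by rewrite intrN mulrN mulrBl opprB -intrM -intrN e2piDz.
Qed.

End FourierMap.

Theorem lemmal (R : realType) (p : int) (q : nat) :
  (0 < q)%N -> coprimez p q%:Z ->
  (forall psi : seqC R, is_per q psi ->
     Fq p q (Rtp psi) = R0 (Fq p q psi)) /\
  (forall psi : seqC R, is_per q psi ->
     Fq p q (Delta psi) = Dq p q 0 (Fq p q psi)) /\
  (forall psi : seqC R, is_per q psi ->
     Fq p q (Dq p q (theta_plus p q) psi) = Delta (Fq p q psi)).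
Proof.
(* coprimality is only needed for F_q to be invertible, not for these identities *)
move=> q_gt0 _; split; [|split] => psi.
- exact: Fq_Rtp.
- exact: Fq_Delta.
- by move=> _; exact: Fq_Dq.
Qed.
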